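(* Let $n$ and $k$ be odd integers with $k\ge3$ and $n>2k+1$. Then $$\chi_c(\mathrm{Pet}(n,k))\ \le\ \frac{2n}{n-k}.$$
   Context: For integers $n,k$ with $2<2k\le n$, the generalized Petersen graph $\mathrm{Pet}(n,k)$ has vertex set $\{u_0,\dots,u_{n-1}\}\cup\{v_0,\dots,v_{n-1}\}$ and edge set $\{u_iu_{i+1}\}\cup\{u_iv_i\}\cup\{v_iv_{i+k}\}$, indices modulo $n$. For integers $p\ge 2q\ge 2$, the circular complete graph $K_{p/q}$ has vertex set $\{0,\dots,p-1\}$ with $i\sim j$ iff $q\le|i-j|\le p-q$; the circular chromatic number $\chi_c(G)$ is the minimum of $p/q$ over all such $p,q$ for which $G$ admits a homomorphism to $K_{p/q}$. *)

From mathcomp Require Import all_boot all_order all_algebra.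
Set Implicit Arguments. Unset Strict Implicit. Unset Printing Implicit Defensive.
Import Order.TTheory GRing.Theory Num.Theory.

(* Vertices of Pet(n,k): inl i = u_i, inr i = v_i, i in {0,...,n-1}. *)
Definition pet_vertex (n : nat) : finType := ('I_n + 'I_n)%type.

Definition pet_adj (n k : nat) : rel (pet_vertex n) :=
  fun x y =>
    match x, y with
    | inl i, inl j => (val j == (val i + 1) %% n) || (val i == (val j + 1) %% n)
    | inl i, inr j => val i == val j
    | inr i, inl j => val i == val j
    | inr i, inr j => (val j == (val i + k) %% n) || (val i == (val j + k) %% n)
    end.

Arguments pet_adj n k : clear implicits.

Definition natdist (i j : nat) : nat := if i <= j then j - i else i - j.

Definition circ_adj (p q : nat) : rel 'I_p :=
  fun i j => (q <= natdist i j) && (natdist i j <= p - q).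

Definition is_hom (V : finType) (adj : rel V) (p q : nat) (f : V -> 'I_p) : Prop :=
  forall x y, adj x y -> circ_adj q (f x) (f y).

(* "chi_c(G) <= r": chi_c(G) is the minimum of p/q over p >= 2q >= 2 such that
   G -> K_{p/q}; so chi_c(G) <= r iff some admissible p/q with G -> K_{p/q}
   satisfies p/q <= r. *)
Definition chi_c_le (V : finType) (adj : rel V) (r : rat) : Prop :=
  exists (p q : nat) (f : V -> 'I_p),
    [/\ (1 <= q)%N, (2 * q <= p)%N, is_hom adj q f & ((p%:Q / q%:Q) <= r)%R].

From mathcomp Require Import all_boot all_order all_algebra.
From mathcomp Require Import zify.

(* The colouring u_i |-> (n-1) i, v_i |-> (n-1) i + n (mod 2n) is a homomorphism
   Pet(n,k) -> K_{2n/(n-k)}.  Modulo 2n, the edge u_i u_{i+1} shifts the colour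
   by n - 1, the spoke u_i v_i by n, and v_i v_{i+k} by (n-1) k = n - k (as k
   is odd); all three shifts lie in [n-k, n+k].  Reducing i+1 and i+k modulo n
   is harmless because (n-1) n = 0 mod 2n when n is odd. *)

Lemma natdistC a b : natdist a b = natdist b a.
Proof. by rewrite /natdist; case: (leqP a b); case: (leqP b a); lia. Qed.

Lemma circ_adjC p q : symmetric (@circ_adj p q).
Proof. by move=> a b; rewrite /circ_adj natdistC. Qed.

Lemma circ_adj_shift p q (a b : 'I_p) d :
  q <= d <= p - q -> b = a + d %[mod p] -> circ_adj q a b.
Proof.
move=> /andP[qd dp]; rewrite [b %% p]modn_small // => bE.
have a_lt_p := ltn_ord a; rewrite /circ_adj bE.
case: (ltnP (a + d) p) => hp.
  by rewrite modn_small // /natdist; case: ifP; lia.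
have -> : a + d = (a + d - p) + p by lia.
by rewrite modnDr modn_small /natdist; [case: ifP|]; lia.
Qed.

Lemma mul_pred_modn_double n x :
  odd n -> (n - 1) * (x %% n) = (n - 1) * x %[mod 2 * n].
Proof.
move=> odd_n; have [m n1E] : exists m, n - 1 = m * 2.
  by exists n./2; move: (odd_double_half n); rewrite odd_n -muln2; lia.
rewrite {2}(divn_eq x n) n1E mulnDr.
have -> : m * 2 * (x %/ n * n) = m * (x %/ n) * (2 * n) by lia.
by rewrite modnMDl.
Qed.

Lemma mul_pred_odd n k :
  odd k -> k <= n -> (n - 1) * k = k./2 * (2 * n) + (n - k).
Proof. by move=> odd_k kn; move: (odd_double_half k); rewrite odd_k -muln2; nia. Qed.

Lemma ord_double_gt0 {n} (i : 'I_n) : 0 < 2 * n.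
Proof. by have := ltn_ord i; lia. Qed.

Definition pet_circ_colour n (x : pet_vertex n) : 'I_(2 * n) :=
  match x with
  | inl i => Ordinal (ltn_pmod ((n - 1) * i) (ord_double_gt0 i))
  | inr i => Ordinal (ltn_pmod ((n - 1) * i + n) (ord_double_gt0 i))
  end.

Lemma pet_circ_colour_hom n k :
  odd n -> odd k -> k < n -> is_hom (pet_adj n k) (n - k) (@pet_circ_colour n).
Proof.
move=> odd_n odd_k kn; have k_gt0 : 0 < k by case: k odd_k {kn}.
move=> [i|i] [j|j] /=.
- case/orP=> /eqP jE; [|rewrite circ_adjC];
    apply: (@circ_adj_shift _ _ _ _ (n - 1)); [lia | |lia |];
    by rewrite /= jE modn_mod modnDml mul_pred_modn_double // mulnDr muln1.
- by move/eqP=> ij; apply: (@circ_adj_shift _ _ _ _ n);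
    [lia | rewrite /= ij modn_mod modnDml].
- by move/eqP=> ij; rewrite circ_adjC; apply: (@circ_adj_shift _ _ _ _ n);
    [lia | rewrite /= ij modn_mod modnDml].
- case/orP=> /eqP jE; [|rewrite circ_adjC];
    apply: (@circ_adj_shift _ _ _ _ (n - k)); [lia | |lia |];
    rewrite /= jE modn_mod modnDml -modnDml mul_pred_modn_double // modnDml;
    by rewrite mulnDr (@mul_pred_odd n k) 1?ltnW // addnCA -addnA modnMDl addnAC.
Qed.

Theorem corollary6 (n k : nat) :
  odd n -> odd k -> (3 <= k)%N -> (2 * k + 1 < n)%N ->
  chi_c_le (pet_adj n k) ((2 * n)%N%:Q / (n - k)%N%:Q)%R.
Proof.
move=> odd_n odd_k _ kn.
exists (2 * n), (n - k), (@pet_circ_colour n); split => //; [lia | lia |].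
by apply: pet_circ_colour_hom => //; lia.
Qed.
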